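(* Let $c=0.24$ and let $N=(2+c)n$, where $n$ is sufficiently large. Then there exist families $\mathcal S$ and $\mathcal T$ of subsets of $[N]=\{1,\dots,N\}$ such that: (i) $|S|=(1-c)n$ for every $S\in\mathcal S$, and $|T|=(1+2c)n$ for every $T\in\mathcal T$; (ii) every $S\in\mathcal S$ and $T\in\mathcal T$ are incomparable (neither $S\subseteq T$ nor $T\subseteq S$); (iii) for every pair of disjoint $A,B\subseteq[N]$ with $|A|=n/2$ and $|B|=n$, there is $S\in\mathcal S$ with $S\subseteq A\cup B$ and $|B\cap S|\le n/2$; (iv) for every pair of disjoint $A,B\subseteq[N]$ with $|A|=n/2$ and $|B|=n$, there is $T\in\mathcal T$ with $T\supseteq [N]\setminus(A\cup B)$ and $|B\setminus T|\le n/2$.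
   Context: As in the paper, quantities such as $(2+c)n$, $(1-c)n$, $(1+2c)n$, $cn$ and $n/2$ are treated as integers (rounding is ignored). *)

(* c = 0.24 = 6/25.  Since the paper treats (2+c)n, (1-c)n,
   (1+2c)n and n/2 as integers, we take n = 50*m (the smallest modulus making
   all of them integers); then
     N = (2+c)n = 112 m,  (1-c)n = 38 m,  (1+2c)n = 74 m,  n/2 = 25 m,  n = 50 m. *)
From mathcomp Require Import all_boot.
Set Implicit Arguments. Unset Strict Implicit. Unset Printing Implicit Defensive.

Definition nn (m : nat) : nat := 50 * m.
Definition NN (m : nat) : nat := 112 * m.
Definition Ssize (m : nat) : nat := 38 * m.
Definition Tsize (m : nat) : nat := 74 * m.
Definition halfn (m : nat) : nat := 25 * m.

(* Write k = (1-c)n = 38m and N = 112m.  Choose a random family of k-sets,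
   keeping each k-set independently with probability p = 1/(8d), where
   d = 'C(74m, 38m) is the number of k-sets disjoint from a given k-set; let S
   be this family and let T consist of the complements of the k-sets that meet
   every member of S.  For disjoint A, B
   with |A| = 25m and |B| = 50m, each of the r = 'C(25m, 13m) 'C(50m, 25m) sets
   X :|: Y with X \subset A, |X| = 13m, Y \subset B, |Y| = 25m witnesses (iii)
   if it lies in S and witnesses (iv), through its complement, if it meets every
   member of S.  Entropy estimates give r >= 16 (N+1) d, so S misses all of them
   with probability (1-p)^r <= 4^-(N+1), and by the exponential moment method
   the probability that every one of them is disjoint from some member of S is
   at most 4^-(N+1) as well.  A union bound over the at most 4^N pairs (A, B)
   leaves a good S. *)

From mathcomp Require Import all_boot all_order all_algebra zify ring lra.
From mathcomp Require Import reals Rstruct.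
From mathcomp.analysis Require Import sequences exp.
Set Implicit Arguments. Unset Strict Implicit. Unset Printing Implicit Defensive.
Import Order.TTheory GRing.Theory Num.Theory.

Section BinomialTerms.
Variables n k : nat.
Hypothesis k_le_n : k <= n.

Let term i := 'C(n, i) * ((n - k) ^ (n - i) * k ^ i).

Let expn_sum_term : n ^ n = \sum_(i < n.+1) term i.
Proof. by rewrite -{1}(subnK k_le_n) expnDn. Qed.

Let term_ratio i : i < n -> term i.+1 * (i.+1 * (n - k)) = term i * ((n - i) * k).
Proof.
move=> lt_i_n; have bin := mul_bin_left n i.
rewrite /term -(subnSK lt_i_n) in bin *; rewrite !expnS.
move: 'C(n, i.+1) 'C(n, i) (n - k) (n - i.+1) bin => c1 c0 a b bin.
transitivity ((i.+1 * c1) * (a * a ^ b * (k * k ^ i))); first ring.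
rewrite bin; ring.
Qed.

Let term_le_mode i : i <= n -> term i <= term k.
Proof.
move=> le_i_n; case: (leqP i k) => [le_ik | lt_ki].
- have convex : {in [pred j | j <= k] &, forall a b c, a < c < b -> c <= k}.
    by move=> a b _ /= le_bk c /andP[_ /ltnW /leq_trans]; apply.
  have step : {in [pred j | j <= k], forall j, j.+1 <= k -> term j <= term j.+1}.
    move=> j _ /= lt_jk; rewrite -(@leq_pmul2r ((n - j) * k)); last by nia.
    by rewrite -term_ratio ?leq_mul2l; [apply/orP; right; nia | lia].
  have mono := homo_leq_in leqnn leq_trans convex step.
  exact: (mono i k le_ik (leqnn k) le_ik).
- pose geq_rel (x y : nat) := y <= x.
  have convex : {in [pred j | k <= j <= n] &, forall a b c, a < c < b -> k <= c <= n}.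
    by move=> a b /andP[le_ka _] /andP[_ le_bn] c /andP[lt_ac lt_cb]; lia.
  have step : {in [pred j | k <= j <= n], forall j,
      k <= j.+1 <= n -> geq_rel (term j) (term j.+1)}.
    move=> j /andP[le_kj _] /andP[_ lt_jn]; rewrite /geq_rel.
    rewrite -(@leq_pmul2r (j.+1 * (n - k))); last by nia.
    by rewrite term_ratio // leq_mul2l; apply/orP; right; nia.
  have geq_trans y x z : geq_rel x y -> geq_rel y z -> geq_rel x z.
    by rewrite /geq_rel => /[swap]; apply: leq_trans.
  have mono := homo_leq_in (r := geq_rel) leqnn geq_trans convex step.
  have Dk : k \in [pred j | k <= j <= n] by rewrite inE /= leqnn k_le_n.
  have Di : i \in [pred j | k <= j <= n] by rewrite inE /= le_i_n (ltnW lt_ki).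
  exact: (mono k i Dk Di (ltnW lt_ki)).
Qed.

Lemma bin_mode_le_pow : 'C(n, k) * ((n - k) ^ (n - k) * k ^ k) <= n ^ n.
Proof.
rewrite expn_sum_term (bigD1 (Ordinal (leq_ltn_trans k_le_n (ltnSn n)))) //=.
exact: leq_addr.
Qed.

Lemma pow_le_bin_mode : n ^ n <= n.+1 * ('C(n, k) * ((n - k) ^ (n - k) * k ^ k)).
Proof.
rewrite expn_sum_term -[n.+1 in X in _ <= X]card_ord -sum_nat_const.
by apply: leq_sum => i _; apply: term_le_mode; rewrite -ltnS.
Qed.

End BinomialTerms.

Lemma expn_scaled c e m : (c * m) ^ (e * m) = (c ^ e) ^ m * (m ^ m) ^ e.
Proof. by rewrite expnMn -!expnM [m * e]mulnC. Qed.

Section ScaledBinomial.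
Variables b c m : nat.

Let bin_scaled_mode :
  'C((b + c) * m, b * m) * ((c * m) ^ (c * m) * (b * m) ^ (b * m))
  = 'C((b + c) * m, b * m) * (c ^ c * b ^ b) ^ m * (m ^ m) ^ (b + c).
Proof. by rewrite !expn_scaled expnMn expnD; ring. Qed.

Let pow_scaled : ((b + c) * m) ^ ((b + c) * m) = ((b + c) ^ (b + c)) ^ m * (m ^ m) ^ (b + c).
Proof. exact: expn_scaled. Qed.

Let bm_le : b * m <= (b + c) * m. Proof. by rewrite leq_mul2r leq_addr orbT. Qed.
Let diff_scaled : (b + c) * m - b * m = c * m. Proof. by rewrite -mulnBl addKn. Qed.

Lemma bin_scaled_le : 'C((b + c) * m, b * m) * (c ^ c * b ^ b) ^ m <= ((b + c) ^ (b + c)) ^ m.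
Proof.
have [->|m_gt0] := posnP m; first by rewrite !muln0 bin0 !expn0.
have := bin_mode_le_pow bm_le; rewrite diff_scaled bin_scaled_mode pow_scaled.
by rewrite leq_pmul2r // !expn_gt0 m_gt0.
Qed.

Lemma bin_scaled_ge :
  ((b + c) ^ (b + c)) ^ m <= ((b + c) * m).+1 * ('C((b + c) * m, b * m) * (c ^ c * b ^ b) ^ m).
Proof.
have [->|m_gt0] := posnP m; first by rewrite !muln0 bin0 !expn0.
have := pow_le_bin_mode bm_le; rewrite diff_scaled bin_scaled_mode pow_scaled mulnA.
by rewrite leq_pmul2r // !expn_gt0 m_gt0.
Qed.

End ScaledBinomial.

Lemma poly_le_pow2 m : 40 <= m -> 16 * (112 * m).+1 * (25 * m).+1 * (50 * m).+1 <= 2 ^ m.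
Proof.
move=> le40m; rewrite -(subnKC le40m); elim: (m - 40) => [|j IH]; first by lia.
by rewrite addnS expnS; move: (2 ^ (40 + j)) IH => x; nia.
Qed.

Lemma leq_mul_of_bounds (K D C1 C2 p1 p2 u v w a b g : nat) :
  0 < p1 -> 0 < p2 -> 0 < u -> 0 < v -> 0 < w ->
  a <= p1 * (C1 * u) -> b <= p2 * (C2 * v) -> D * w <= g ->
  K * p1 * p2 * (g * u * v) <= a * b * w -> K * D <= C1 * C2.
Proof.
move=> p1_gt0 p2_gt0 u_gt0 v_gt0 w_gt0 le_a le_b le_Dw le_K.
have M_gt0 : 0 < p1 * p2 * u * v * w by rewrite !muln_gt0 p1_gt0 p2_gt0 u_gt0 v_gt0.
rewrite -(leq_pmul2r M_gt0).
have -> : K * D * (p1 * p2 * u * v * w) = K * p1 * p2 * (D * w * u * v) by ring.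
apply: leq_trans (leq_mul (leqnn _) (leq_mul (leq_mul le_Dw (leqnn u)) (leqnn v))) _.
apply: leq_trans le_K _; apply: leq_trans (leq_mul (leq_mul le_a le_b) (leqnn w)) _.
by rewrite eq_leq //; ring.
Qed.

Lemma leq_mul_pow (K x y z a b c m : nat) :
  K <= 2 ^ m -> 2 * (x * y * z) <= a * b * c ->
  K * (x ^ m * y ^ m * z ^ m) <= a ^ m * b ^ m * c ^ m.
Proof.
move=> le_K le_xyz; rewrite -!expnMn.
apply: leq_trans (leq_mul le_K (leqnn _)) _.
by rewrite -expnMn; case: m {le_K} => [|m]; rewrite ?expn0 ?leq_exp2r.
Qed.

Lemma bin_key m : 40 <= m ->
  16 * (112 * m).+1 * 'C(74 * m, 38 * m) <= 'C(25 * m, 13 * m) * 'C(50 * m, 25 * m).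
Proof.
move=> le40m.
have h1 : (25 ^ 25) ^ m <= (25 * m).+1 * ('C(25 * m, 13 * m) * (12 ^ 12 * 13 ^ 13) ^ m)
  := bin_scaled_ge 13 12 m.
have h2 : (50 ^ 50) ^ m <= (50 * m).+1 * ('C(50 * m, 25 * m) * (25 ^ 25 * 25 ^ 25) ^ m)
  := bin_scaled_ge 25 25 m.
have h3 : 'C(74 * m, 38 * m) * (36 ^ 36 * 38 ^ 38) ^ m <= (74 ^ 74) ^ m
  := bin_scaled_le 38 36 m.
have pow_gt0 c d e f : 0 < (c.+1 ^ e * d.+1 ^ f) ^ m.
  by rewrite !expn_gt0 muln_gt0 !expn_gt0.
apply: (leq_mul_of_bounds (K := 16 * (112 * m).+1) _ _ _ _ _ h1 h2 h3);
  [exact: ltn0Sn | exact: ltn0Sn | exact: pow_gt0 | exact: pow_gt0 | exact: pow_gt0 |].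
apply: leq_mul_pow (poly_le_pow2 le40m) _.
(* The entropy inequality, with a factor 2 to spare per unit of m. *)
by lia.
Qed.

Section Blend.
Variable T : finType.
Implicit Types A B X Y U : {set T}.

Lemma setIUl_disjoint A B X Y :
  [disjoint A & B] -> X \subset A -> Y \subset B -> (X :|: Y) :&: A = X.
Proof.
move=> AB XA YB; rewrite setIUl (setIidPl XA).
rewrite disjoint_sym in AB.
by rewrite (disjoint_setI0 (disjointWl YB AB)) setU0.
Qed.

Lemma setIUr_disjoint A B X Y :
  [disjoint A & B] -> X \subset A -> Y \subset B -> (X :|: Y) :&: B = Y.
Proof. by rewrite disjoint_sym setUC => AB XA YB; apply: setIUl_disjoint AB YB XA. Qed.

Definition blend A B (a b : nat) : {set {set T}} :=
  [set X :|: Y | X in [set X : {set T} | X \subset A & #|X| == a],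
                 Y in [set Y : {set T} | Y \subset B & #|Y| == b]].

Lemma mem_blend A B a b U : [disjoint A & B] -> U \in blend A B a b ->
  [/\ #|U| = a + b, U \subset A :|: B & #|B :&: U| = b].
Proof.
move=> AB /imset2P[X Y]; rewrite !inE => /andP[XA /eqP cardX] /andP[YB /eqP cardY] ->.
split; last by rewrite setIC (setIUr_disjoint AB XA YB).
- by rewrite cardsU -cardX -cardY (disjoint_setI0 (disjointW XA YB AB)) cards0 subn0.
- exact: setUSS.
Qed.

Lemma card_blend A B a b : [disjoint A & B] -> #|blend A B a b| = 'C(#|A|, a) * 'C(#|B|, b).
Proof.
move=> AB; rewrite /blend curry_imset2X card_in_imset ?cardsX ?cards_draws //.
move=> [X Y] [X' Y']; rewrite !inE /= => /andP[/andP[XA _] /andP[YB _]].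
move=> /andP[/andP[X'A _] /andP[Y'B _]] eqU.
by congr pair; [rewrite -(setIUl_disjoint AB XA YB) eqU (setIUl_disjoint AB X'A Y'B)
               |rewrite -(setIUr_disjoint AB XA YB) eqU (setIUr_disjoint AB X'A Y'B)].
Qed.

Lemma card_disjoint_ksets X k : #|X| = k ->
  #|[set Y : {set T} | #|Y| == k & [disjoint Y & X]]| = 'C(#|T| - k, k).
Proof.
move=> cardX.
have -> : [set Y : {set T} | #|Y| == k & [disjoint Y & X]] = [set Y : {set T} | Y \subset ~: X & #|Y| == k].
  by apply/setP => Y; rewrite !inE disjoints_subset andbC.
by rewrite cards_draws cardsCs setCK cardX.
Qed.

End Blend.

Lemma card_set_sum (T : finType) (P Q : pred T) :
  #|[set x | P x && Q x]| = \sum_(x | P x) Q x.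
Proof.
rewrite -sum1_card (eq_bigl (fun x => P x && Q x)) => [|x]; last by rewrite inE.
by rewrite big_mkcondr; apply: eq_bigr => x _; case: (Q x).
Qed.

Lemma sum_card_rel (I J : finType) (P : pred I) (Q : pred J) (e : I -> J -> bool) :
  \sum_(i | P i) #|[set j | Q j && e i j]| = \sum_(j | Q j) #|[set i | P i && e i j]|.
Proof.
under eq_bigr => i _ do rewrite card_set_sum.
by rewrite exchange_big; apply: eq_bigr => j _; rewrite card_set_sum.
Qed.

Section Covering.
Variables (I : finType) (e : rel I) (Rf : {set I}).

Definition covered (f : {ffun I -> bool}) := [forall u in Rf, [exists i, f i && e i u]].

Lemma covered_sum_card f : covered f -> #|Rf| <= \sum_(i | f i) #|[set u in Rf | e i u]|.
Proof.
move=> /forall_inP cov; rewrite (sum_card_rel f [in Rf]) -sum1_card.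
apply: leq_sum => u uRf; rewrite card_gt0; apply/set0Pn.
by have /existsP[i fi_eiu] := cov u uRf; exists i; rewrite inE.
Qed.

Lemma sum_card_le d : (forall u, u \in Rf -> #|[set i | e i u]| <= d) ->
  \sum_i #|[set u in Rf | e i u]| <= #|Rf| * d.
Proof.
move=> codeg_le; rewrite (sum_card_rel predT [in Rf]) -sum_nat_const.
apply: leq_sum => u uRf; apply: leq_trans (codeg_le u uRf).
by apply: subset_leq_card; apply/subsetP => i; rewrite !inE.
Qed.

End Covering.

Local Open Scope ring_scope.

Section PowerBounds.
Variable R : realFieldType.

Lemma expr1D_mul_le1 (a : R) j : 0 <= a -> (1 + a) ^+ j * (1 - j%:R * a) <= 1.
Proof.
move=> a_ge0; elim: j => [|j IH]; first by rewrite mul0r subr0 mulr1.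
have pow_ge0 : 0 <= (1 + a) ^+ j by apply: exprn_ge0; lra.
have j_ge0 : 0 <= j%:R :> R by [].
rewrite exprS -nat1r; move: ((1 + a) ^+ j) pow_ge0 IH => X X_ge0 IH.
have : 0 <= X * (j%:R * a * a + a * a) by apply: mulr_ge0 => //; nra.
nra.
Qed.

Lemma expr1D_le (a : R) j : 0 <= a -> j%:R * a <= 1 / 2 -> (1 + a) ^+ j <= 1 + 2 * (j%:R * a).
Proof.
move=> a_ge0 ja_le; have := expr1D_mul_le1 j a_ge0.
have : 0 <= j%:R * a by apply: mulr_ge0.
move: ((1 + a) ^+ j) (j%:R * a) ja_le => X y y_le y_ge0 le1; nra.
Qed.

Lemma natmul_inv_pow4_lt1 k n : (k <= 4 ^ n)%N -> (2 * ((4 ^ n.+1)%:R)^-1) *+ k < 1 :> R.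
Proof.
move=> k_le; rewrite -mulr_natr.
have pow_pos : 0 < (4 ^ n)%:R :> R by rewrite ltr0n expn_gt0.
apply: (@le_lt_trans _ _ (2 * ((4 ^ n.+1)%:R)^-1 * (4 ^ n)%:R)).
  by rewrite ler_pM2l ?ler_nat // mulr_gt0 ?invr_gt0 ?ltr0n ?expn_gt0.
by rewrite expnS natrM (_ : _ * _ = 1 / 2); [lra | field; rewrite gt_eqF].
Qed.

End PowerBounds.

Section ExpBounds.
Variable R : realType.

Lemma expr1B_le_expR (x : R) n : x <= 1 -> (1 - x) ^+ n <= expR (- x * n%:R).
Proof.
move=> x_le1; rewrite expRM_natr; apply: lerXn2r; rewrite ?nnegrE ?expR_ge0 ?subr_ge0 //.
exact: expR_ge1Dx.
Qed.

Lemma exprV1D_le_expR (x : R) n : 0 <= x -> ((1 + x) ^+ n)^-1 <= expR (- (x / (1 + x)) * n%:R).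
Proof.
move=> x_ge0; have x1_gt0 : 0 < 1 + x by lra.
rewrite expRM_natr -exprVn; apply: lerXn2r; rewrite ?nnegrE ?expR_ge0 ?invr_ge0 ?(ltW x1_gt0) //.
rewrite [X in X <= _](_ : _ = 1 - x / (1 + x)); last by field; lra.
exact: expR_ge1Dx.
Qed.

Lemma expR_le_inv_pow4 (x : R) n : (2 * n)%:R <= x -> expR (- x) <= ((4 ^ n)%:R)^-1.
Proof.
move=> le_x; rewrite expRN lef_pV2 ?posrE ?expR_gt0 ?ltr0n ?expn_gt0 //.
apply: (@le_trans _ _ (expR (2 * n)%:R)); last by rewrite ler_expR.
rewrite -[(2 * n)%:R]mulr1 expRM_natl exprM natrX; apply: lerXn2r;
  rewrite ?nnegrE ?exprn_ge0 ?expR_ge0 //.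
by have := expR_ge1Dx (1 : R); rewrite expr2; nra.
Qed.

Lemma mix_pow_le_expR (p : R) (d g : nat) : 0 <= p -> (0 < d)%N -> (g <= d)%N ->
  p * (1 + (2 * d)%:R^-1) ^+ g + (1 - p) <= expR (p / d%:R * g%:R).
Proof.
move=> p_ge0 d_gt0 g_le_d; set a : R := (2 * d)%:R^-1.
have d_pos : 0 < d%:R :> R by rewrite ltr0n.
have g_le_dR : g%:R <= d%:R :> R by rewrite ler_nat.
have ga_le : g%:R * a <= 1 / 2 by rewrite /a natrM ler_pdivrMr ?mulr_gt0 //; lra.
have two_ga : 2 * (g%:R * a) = g%:R / d%:R by rewrite /a natrM; field; rewrite gt_eqF.
have a_ge0 : 0 <= a by rewrite invr_ge0.
have := expr1D_le a_ge0 ga_le; rewrite two_ga => pow_le.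
apply: le_trans (expR_ge1Dx _).
by have := ler_wpM2l p_ge0 pow_le; rewrite mulrDr mulr1 mulrA; lra.
Qed.

End ExpBounds.

Lemma sum_ffun_prod (R : comNzRingType) (I : finType) (h : I -> bool -> R) :
  \sum_(f : {ffun I -> bool}) \prod_i h i (f i) = \prod_i (h i true + h i false).
Proof. by rewrite -bigA_distr_bigA; apply: eq_bigr => i _; rewrite big_bool. Qed.

Lemma natr_exists_le_sum (R : numDomainType) (J : finType) (V : {set J}) (b : pred J) :
  [exists j in V, b j]%:R <= \sum_(j in V) (b j)%:R :> R.
Proof.
case: exists_inP => [[j jV bj] | _]; last by rewrite sumr_ge0.
rewrite (bigD1 j) //= bj lerDl; exact: sumr_ge0.
Qed.

Lemma natr_orb_le (R : numDomainType) (b c : bool) : (b || c)%:R <= b%:R + c%:R :> R.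
Proof. by case: b; case: c; rewrite /= ?addr0 ?add0r ?lerDl. Qed.

Section RandomSelection.
Variables (R : realType) (I : finType) (p : R).
Hypotheses (p_ge0 : 0 <= p) (p_le1 : p <= 1).

(* [weight f] is the probability that the random selection, which keeps each
   [i] independently with probability [p], equals [f]. *)
Definition weight (f : {ffun I -> bool}) : R := \prod_i (if f i then p else 1 - p).

Lemma weight_ge0 f : 0 <= weight f.
Proof. by apply: prodr_ge0 => i _; case: (f i); rewrite ?subr_ge0. Qed.

Lemma sum_weight_prod (z : I -> R) :
  \sum_f weight f * \prod_(i | f i) z i = \prod_i (p * z i + (1 - p)).
Proof.
rewrite -(sum_ffun_prod (fun i b => if b then p * z i else 1 - p)).
apply: eq_bigr => f _; rewrite /weight (big_mkcond (fun i => f i)) -big_split /=.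
by apply: eq_bigr => i _; case: (f i); rewrite ?mulr1.
Qed.

Lemma sum_weight : \sum_f weight f = 1.
Proof.
transitivity (\sum_f weight f * \prod_(i | f i) (1 : R)).
  by apply: eq_bigr => f _; rewrite big1 ?mulr1.
by rewrite sum_weight_prod big1 // => i _; rewrite mulr1 addrC subrK.
Qed.

Lemma sum_weight_none (A : {set I}) :
  \sum_f weight f * [forall i in A, ~~ f i]%:R = (1 - p) ^+ #|A|.
Proof.
have prod_notin f : \prod_(i | f i) ((i \notin A)%:R : R) = [forall i in A, ~~ f i]%:R.
  case: forall_inP => [none | /forall_inP/forall_inPn[i iA /negPn fi]].
    by apply: big1 => i fi; rewrite (contraTN (none i) fi).
  by rewrite (bigD1 i) //= iA mul0r.
under eq_bigr => f _ do rewrite -prod_notin.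
rewrite sum_weight_prod (bigID [in A]) /= -prodr_const.
rewrite [\prod_(i | i \notin A) _]big1 => [|i /negbTE iA]; last by rewrite iA /= mulr1 addrC subrK.
by rewrite mulr1; apply: eq_bigr => i iA; rewrite iA /= mulr0 add0r.
Qed.

Lemma exists_of_sum_weight_lt1 (bad : pred {ffun I -> bool}) :
  \sum_f weight f * (bad f)%:R < 1 -> exists f, ~~ bad f.
Proof.
move=> lt1; apply/existsP; apply: contraTT lt1 => /existsPn all_bad.
rewrite -leNgt (eq_bigr weight) ?sum_weight // => f _.
by rewrite (negbNE (all_bad f)) mulr1.
Qed.

Section WeightedCovering.
Variables (e : rel I) (Rf : {set I}) (d : nat).
Hypothesis d_gt0 : (0 < d)%N.
Hypothesis deg_le : forall i, (#|[set u in Rf | e i u]| <= d)%N.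
Hypothesis codeg_le : forall u, u \in Rf -> (#|[set i | e i u]| <= d)%N.

(* Exponential moment method: a covering selection makes
   [Z f = \prod_(i | f i) (1 + a) ^+ deg i] at least [(1 + a) ^+ #|Rf|], while
   the expectation of [Z] is at most [expR (p * #|Rf|)]. *)
Lemma sum_weight_covered :
  \sum_f weight f * (covered e Rf f)%:R
    <= expR (p * #|Rf|%:R) / (1 + (2 * d)%:R^-1) ^+ #|Rf|.
Proof.
set a : R := (2 * d)%:R^-1; set r := #|Rf|.
pose deg i := #|[set u in Rf | e i u]|.
pose Z f := \prod_(i | f i) (1 + a) ^+ deg i.
have d_pos : 0 < d%:R :> R by rewrite ltr0n.
have pow_gt0 : 0 < (1 + a) ^+ r by apply: exprn_gt0; rewrite ltr_pwDl ?invr_ge0.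
have cov_le f : (covered e Rf f)%:R <= Z f / (1 + a) ^+ r.
  have Z_ge0 : 0 <= Z f by apply: prodr_ge0 => i _; rewrite exprn_ge0 ?addr_ge0 ?invr_ge0.
  case: (boolP (covered e Rf f)) => [cov | _]; last by apply: divr_ge0 => //; apply: ltW.
  rewrite ler_pdivlMr // mul1r /Z prodrXr ler_weXn2l ?lerDl ?invr_ge0 //.
  exact: covered_sum_card.
have moment : \sum_f weight f * Z f <= expR (p * r%:R).
  rewrite sum_weight_prod.
  apply: (@le_trans _ _ (\prod_i expR (p / d%:R * (deg i)%:R))).
    apply: ler_prod => i _; rewrite mix_pow_le_expR ?deg_le // andbT.
    by rewrite addr_ge0 ?subr_ge0 ?mulr_ge0 ?exprn_ge0 ?addr_ge0 ?invr_ge0.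
  rewrite -expR_sum ler_expR -mulr_sumr -natr_sum.
  have le_sum : (\sum_i deg i)%:R <= r%:R * d%:R :> R.
    by rewrite -natrM ler_nat sum_card_le.
  apply: le_trans (ler_wpM2l (divr_ge0 p_ge0 (ltW d_pos)) le_sum) _.
  by rewrite le_eqVlt; apply/orP; left; apply/eqP; field; rewrite gt_eqF.
apply: (@le_trans _ _ (\sum_f weight f * Z f / (1 + a) ^+ r)).
  by apply: ler_sum => f _; rewrite -mulrA; exact (ler_wpM2l (weight_ge0 f) (cov_le f)).
by rewrite -mulr_suml ler_wpM2r // invr_ge0 ltW.
Qed.

End WeightedCovering.

End RandomSelection.

Section SelectionBounds.
Variables (R : realType) (I : finType) (e : rel I) (Rf : {set I}) (d n : nat).
Hypothesis d_gt0 : (0 < d)%N.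
Hypothesis Rf_large : (16 * n.+1 * d <= #|Rf|)%N.

Let p : R := (8 * d)%:R^-1.
Let d_pos : 0 < d%:R :> R. Proof. by rewrite ltr0n. Qed.
Let p_ge0 : 0 <= p. Proof. by rewrite invr_ge0. Qed.
Let p_le1 : p <= 1. Proof. by rewrite invf_le1 ?ler1n ?ltr0n ?muln_gt0. Qed.

Let p_mul_card_ge : (2 * n.+1)%:R <= p * #|Rf|%:R.
Proof.
have le_card : (16 * n.+1 * d)%:R <= #|Rf|%:R :> R by rewrite ler_nat.
apply: le_trans (ler_wpM2l p_ge0 le_card).
by rewrite le_eqVlt; apply/orP; left; apply/eqP; rewrite /p !natrM; field; rewrite gt_eqF.
Qed.

Lemma sum_weight_none_le :
  \sum_f weight p f * [forall i in Rf, ~~ f i]%:R <= ((4 ^ n.+1)%:R)^-1.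
Proof.
rewrite sum_weight_none //; apply: le_trans (expr1B_le_expR _ p_le1) _.
by rewrite mulNr; exact: expR_le_inv_pow4.
Qed.

Hypothesis deg_le : forall i, (#|[set u in Rf | e i u]| <= d)%N.
Hypothesis codeg_le : forall u, u \in Rf -> (#|[set i | e i u]| <= d)%N.

Lemma sum_weight_covered_le :
  \sum_f weight p f * (covered e Rf f)%:R <= ((4 ^ n.+1)%:R)^-1.
Proof.
set a : R := (2 * d)%:R^-1.
have a_ge0 : 0 <= a by rewrite invr_ge0.
apply: le_trans (sum_weight_covered p_ge0 p_le1 d_gt0 deg_le codeg_le) _.
apply: le_trans (ler_wpM2l (expR_ge0 _) (exprV1D_le_expR #|Rf| a_ge0)) _.
rewrite -expRD; apply: le_trans (expR_le_inv_pow4 p_mul_card_ge); rewrite ler_expR.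
have d_ge1 : 1 <= d%:R :> R by rewrite ler1n.
have two_p_le : 2 * p <= a / (1 + a).
  rewrite -subr_ge0 (_ : _ - _ = (2 * d%:R - 1) / (4 * d%:R * (2 * d%:R + 1))).
    by apply: divr_ge0; [|apply: mulr_ge0; [apply: mulr_ge0|]]; lra.
  by rewrite /a /p !natrM; field; rewrite !gt_eqF //; lra.
have card_ge0 : 0 <= #|Rf|%:R :> R by [].
nra.
Qed.

Lemma sum_weight_bad_le :
  \sum_f weight p f * ([forall i in Rf, ~~ f i] || covered e Rf f)%:R
    <= 2 * ((4 ^ n.+1)%:R)^-1.
Proof.
apply: (@le_trans _ _ (\sum_f (weight p f * [forall i in Rf, ~~ f i]%:R
                              + weight p f * (covered e Rf f)%:R))).
  apply: ler_sum => f _; rewrite -mulrDr.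
  exact (ler_wpM2l (weight_ge0 p_ge0 p_le1 f) (natr_orb_le _ _ _)).
by rewrite big_split /=; have := sum_weight_none_le; have := sum_weight_covered_le; lra.
Qed.

End SelectionBounds.

Lemma exists_selection (I J : finType) (e : rel I) (V : {set J}) (Rf : J -> {set I}) (n d : nat) :
  (0 < d)%N -> (#|V| <= 4 ^ n)%N ->
  (forall j i, j \in V -> #|[set u in Rf j | e i u]| <= d)%N ->
  (forall j u, j \in V -> u \in Rf j -> #|[set i | e i u]| <= d)%N ->
  (forall j, j \in V -> 16 * n.+1 * d <= #|Rf j|)%N ->
  exists f : {ffun I -> bool},
    forall j, j \in V -> [exists i in Rf j, f i] /\ ~~ covered e (Rf j) f.
Proof.
move=> d_gt0 V_le deg_le codeg_le Rf_large.
pose p : Rdefinitions.R := (8 * d)%:R^-1.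
have p_ge0 : 0 <= p by rewrite invr_ge0.
have p_le1 : p <= 1 by rewrite invf_le1 ?ler1n ?ltr0n ?muln_gt0.
pose bad_at j (f : {ffun I -> bool}) := [forall i in Rf j, ~~ f i] || covered e (Rf j) f.
have [f /exists_inPn good] : exists f, ~~ [exists j in V, bad_at j f].
  apply: (exists_of_sum_weight_lt1 (p := p)).
  apply: (@le_lt_trans _ _ (\sum_(j in V) \sum_f weight p f * (bad_at j f)%:R)).
    rewrite exchange_big; apply: ler_sum => f _; rewrite -mulr_sumr.
    exact (ler_wpM2l (weight_ge0 p_ge0 p_le1 f) (natr_exists_le_sum _ _ _)).
  apply: le_lt_trans (natmul_inv_pow4_lt1 _ V_le); rewrite -sumr_const.
  apply: ler_sum => j jV.
  exact: sum_weight_bad_le d_gt0 (Rf_large j jV) (deg_le j^~ jV) (codeg_le j^~ jV).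
exists f => j jV; move: (good j jV); rewrite negb_or.
case/andP => /forall_inPn[i iRf /negPn fi] not_cov; split=> //.
by apply/exists_inP; exists i.
Qed.

Local Close Scope ring_scope.

Lemma card_sets (T : finType) : #|{set T}| = 2 ^ #|T|.
Proof. by rewrite -[#|{set T}|]cardsT -powersetT card_powerset cardsT. Qed.

Section Construction.
Variable m : nat.
Hypothesis le40m : 40 <= m.
Local Notation T := 'I_(NN m).

Lemma card_T : #|T| = 112 * m. Proof. exact: card_ord. Qed.

Lemma selection_for_pairs : exists f : {ffun {set T} -> bool},
  forall A B : {set T}, [disjoint A & B] -> #|A| = halfn m -> #|B| = nn m ->
    (exists2 S, S \in blend A B (13 * m) (25 * m) & f S) /\
    (exists2 U, U \in blend A B (13 * m) (25 * m) &
       forall S, f S -> #|S| = Ssize m -> ~~ [disjoint S & U]).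
Proof.
pose V := [set AB : {set T} * {set T} |
             [&& [disjoint AB.1 & AB.2], #|AB.1| == halfn m & #|AB.2| == nn m]].
pose Rf (AB : {set T} * {set T}) := blend AB.1 AB.2 (13 * m) (25 * m).
pose e (S U : {set T}) := (#|S| == Ssize m) && [disjoint S & U].
have VP AB : AB \in V -> [disjoint AB.1 & AB.2] by rewrite inE => /and3P[].
have codeg (U : {set T}) : #|U| = Ssize m -> #|[set S | e S U]| = 'C(74 * m, 38 * m).
  move=> cU; rewrite (card_disjoint_ksets cU) card_T /Ssize.
  by congr 'C(_, _); lia.
have d_gt0 : 0 < 'C(74 * m, 38 * m) by rewrite bin_gt0; lia.
have V_le : #|V| <= 4 ^ #|T|.
  by apply: leq_trans (max_card _) _; rewrite card_prod card_sets -expnMn.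
have deg_le AB S : AB \in V -> #|[set U in Rf AB | e S U]| <= 'C(74 * m, 38 * m).
  move=> ABV; have [cS|ncS] := eqVneq #|S| (Ssize m).
    rewrite -(codeg S cS); apply: subset_leq_card; apply/subsetP => U.
    rewrite !inE => /andP[/(mem_blend (VP AB ABV))[cU _ _] /andP[_ SU]].
    by rewrite /e cU /Ssize -mulnDl eqxx disjoint_sym.
  rewrite (_ : [set U in Rf AB | e S U] = set0) ?cards0 //.
  by apply/setP => U; rewrite !inE /e (negbTE ncS) andbF.
have codeg_le AB U : AB \in V -> U \in Rf AB -> #|[set S | e S U]| <= 'C(74 * m, 38 * m).
  by move=> ABV /(mem_blend (VP AB ABV))[cU _ _]; rewrite codeg // cU /Ssize -mulnDl.
have Rf_large AB : AB \in V -> 16 * #|T|.+1 * 'C(74 * m, 38 * m) <= #|Rf AB|.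
  rewrite inE => /and3P[AB_dis /eqP cA /eqP cB].
  by rewrite card_blend // cA cB card_T; exact: bin_key.
have [f good] := exists_selection d_gt0 V_le deg_le codeg_le Rf_large.
exists f => A B AB cA cB.
have /good[/exists_inP[S SR fS] /forall_inPn[U UR /existsPn avoid]] : (A, B) \in V.
  by rewrite inE /= AB cA cB !eqxx.
split; [by exists S | exists U => // S' fS' cS'].
by have := avoid S'; rewrite /e fS' cS' eqxx.
Qed.

End Construction.

Theorem lemma18 :
  exists m0 : nat, forall m : nat, m0 <= m ->
  exists (SS TT : {set {set 'I_(NN m)}}),
    (* (i) *)
    (forall S, S \in SS -> #|S| = Ssize m) /\
    (forall T, T \in TT -> #|T| = Tsize m) /\
    (* (ii) *)
    (forall S T, S \in SS -> T \in TT -> ~~ (S \subset T) /\ ~~ (T \subset S)) /\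
    (* (iii) *)
    (forall A B : {set 'I_(NN m)}, [disjoint A & B] ->
       #|A| = halfn m -> #|B| = nn m ->
       exists2 S, S \in SS & (S \subset A :|: B) /\ #|B :&: S| <= halfn m) /\
    (* (iv) *)
    (forall A B : {set 'I_(NN m)}, [disjoint A & B] ->
       #|A| = halfn m -> #|B| = nn m ->
       exists2 T, T \in TT & (~: (A :|: B) \subset T) /\ #|B :\: T| <= halfn m).
Proof.
exists 40 => m le40m; have [f sel] := selection_for_pairs le40m.
pose SS := [set S | f S & #|S| == Ssize m].
pose TT := [set ~: U | U in [set U : {set 'I_(NN m)} | #|U| == Ssize m & [forall S in SS, ~~ [disjoint S & U]]]].
have card_compl (U : {set 'I_(NN m)}) : #|U| = Ssize m -> #|~: U| = Tsize m.
  by move=> cU; have := cardsC U; rewrite card_T cU /Ssize /Tsize; lia.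
have blend_size : 13 * m + 25 * m = Ssize m by rewrite /Ssize -mulnDl.
exists SS, TT; split; [|split; [|split; [|split]]].
- by move=> S; rewrite inE => /andP[_ /eqP].
- by move=> T /imsetP[U]; rewrite inE => /andP[/eqP /card_compl cU _] ->.
- move=> S T SS_S /imsetP[U]; rewrite inE => /andP[/eqP cU /forall_inP meets] ->.
  split; first by rewrite -disjoints_subset meets.
  apply/negP => /subset_leq_card; rewrite card_compl //.
  by move: SS_S; rewrite inE => /andP[_ /eqP ->]; rewrite /Ssize /Tsize; lia.
- move=> A B AB cA cB; have [[S SR fS] _] := sel A B AB cA cB.
  have [cS sub cBS] := mem_blend AB SR.
  exists S; first by rewrite inE fS cS blend_size eqxx.
  by rewrite sub cBS.
- move=> A B AB cA cB; have [_ [U UR avoid]] := sel A B AB cA cB.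
  have [cU sub cBU] := mem_blend AB UR.
  exists (~: U); last by rewrite setCS sub setDE setCK cBU.
  apply: imset_f; rewrite inE cU blend_size eqxx /=.
  by apply/forall_inP => S; rewrite inE => /andP[fS /eqP]; apply: avoid.
Qed.
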